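(* Under assumptions (i) and (ii) below, $\mathcal T\subset\mathcal L(H_1,H_2)$, where $\mathcal T=\{H\in\mathcal O:(H\psi_k,\psi_k)=0\text{ for all }k=1,\dots,N\}$ (a real space of dimension $N(N-1)$). (i) $(H_1\psi_k,\psi_j)\ne0$ for all $k\ne j$; (ii) $\lambda_k-\lambda_l\ne\lambda_{k'}-\lambda_{l'}$ for all ordered pairs $(k,l)\ne(k',l')$, where $\lambda_k$ are the eigenvalues of $H_2$ and $\psi_k$ corresponding orthonormal eigenvectors.
   Context: $\mathcal H=\mathbb C^N$, $N>1$. $\mathcal O$ is the real vector space of Hermitian operators on $\mathcal H$, with bracket $\{A,B\}=i(AB-BA)$. For $H_1,H_2\in\mathcal O$, $\mathcal L(H_1,H_2)$ is the real linear span of $H_1,H_2$ and all iterated brackets $\{H_1,H_2\},\{H_1,\{H_1,H_2\}\},\{H_2,\{H_1,H_2\}\},\dots$. *)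

(* The complex numbers C are modelled by an arbitrary
   numClosedFieldType (algebraically closed field with conjugation and
   ordered real part), e.g. algC. *)
From HB Require Import structures.
From mathcomp Require Import all_boot all_order all_algebra.
Set Implicit Arguments. Unset Strict Implicit. Unset Printing Implicit Defensive.
Import Order.TTheory GRing.Theory Num.Theory.
Local Open Scope ring_scope.

Definition inner (C : numClosedFieldType) (N : nat) (x y : 'cV[C]_N) : C :=
  \sum_(i < N) x i ord0 * (y i ord0)^*.

Definition herm_op (C : numClosedFieldType) (N : nat) (A : 'M[C]_N) : Prop :=
  map_mx Num.conj (A^T) = A.

Definition bracket (C : numClosedFieldType) (N : nat) (A B : 'M[C]_N) : 'M[C]_N :=
  'i *: (A *m B - B *m A).

Inductive brterm : Type :=
  | BLeaf1 : brterm
  | BLeaf2 : brterm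
  | BNode : brterm -> brterm -> brterm.

Fixpoint br_eval (C : numClosedFieldType) (N : nat) (H1 H2 : 'M[C]_N)
    (t : brterm) : 'M[C]_N :=
  match t with
  | BLeaf1 => H1
  | BLeaf2 => H2
  | BNode t1 t2 => bracket (br_eval H1 H2 t1) (br_eval H1 H2 t2)
  end.

(* H belongs to L(H1,H2): the real linear span of H1, H2 and all iterated
   brackets, i.e. a finite real linear combination of evaluated terms. *)
Definition in_L (C : numClosedFieldType) (N : nat) (H1 H2 H : 'M[C]_N) : Prop :=
  exists s : seq (C * brterm),
    all (fun p => p.1 \is Num.real) s /\
    H = \sum_(p <- s) p.1 *: br_eval H1 H2 p.2.

(* In the eigenbasis of H2, bracketing with H2 multiplies the (k, j) entry by
   i (lambda_k - lambda_j), so the m-fold bracket ad_{H2}^m H1 has entries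
   (i (lambda_k - lambda_j))^m (H1)_{kj}.  By (ii) the N(N-1) numbers
   i (lambda_k - lambda_j), k <> j, are distinct and nonzero, so a polynomial Q
   with Q(0) = 0 interpolates H_{kj} / (H1)_{kj} (legitimate by (i)) at them.
   Replacing Q by its real part keeps the interpolation property because H, H1
   are Hermitian and the nodes for (k, j) and (j, k) are complex conjugate; the
   diagonal vanishes on both sides since Q(0) = 0.  Hence H is the real
   combination sum_m Re(Q_m) ad_{H2}^m H1 of iterated brackets. *)
From HB Require Import structures.
From mathcomp Require Import all_boot all_order all_algebra.
Set Implicit Arguments. Unset Strict Implicit. Unset Printing Implicit Defensive.
Import Order.TTheory GRing.Theory Num.Theory.
From mathcomp Require Import ring.
Local Open Scope ring_scope.

Lemma exists_poly_interp_root0 (F : fieldType) (I : finType) (P : pred I)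
    (x y : I -> F) :
  (forall p, P p -> x p != 0) ->
  (forall p q, P p -> P q -> p != q -> x p != x q) ->
  exists Q : {poly F}, Q.[0] = 0 /\ forall p, P p -> Q.[x p] = y p.
Proof.
move=> x_neq0 x_inj.
(* Lagrange basis for the nodes x p together with the extra node 0. *)
pose L p := 'X * (x p)^-1%:P *
  \prod_(q | P q && (q != p)) (('X - (x q)%:P) * (x p - x q)^-1%:P).
have hornerL p z : (L p).[z] =
    z * (x p)^-1 * \prod_(q | P q && (q != p)) ((z - x q) * (x p - x q)^-1).
  rewrite /L !hornerM hornerX hornerC horner_prod; congr (_ * _).
  by apply: eq_bigr => q _; rewrite hornerM hornerXsubC hornerC.
exists (\sum_(p | P p) y p *: L p); split.
  by rewrite horner_sum big1 // => p _; rewrite hornerZ hornerL !mul0r mulr0.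
move=> p Pp; rewrite horner_sum (bigD1 p) //= big1 ?addr0.
  rewrite hornerZ hornerL mulfV ?x_neq0 // mul1r big1 ?mulr1 // => q /andP[Pq qp].
  by rewrite mulfV // subr_eq0 x_inj // eq_sym.
move=> r /andP[Pr rp]; rewrite hornerZ hornerL (bigD1 p) /=; last by rewrite Pp eq_sym.
by rewrite subrr !mul0r !mulr0.
Qed.

Lemma horner_Re_coef (C : numClosedFieldType) (Q : {poly C}) (z : C) :
  \sum_(i < size Q) 'Re Q`_i * z ^+ i = (Q.[z] + (Q.[z^*])^*) / 2.
Proof.
rewrite !horner_coef rmorph_sum -big_split mulr_suml /=.
by apply: eq_bigr => i _; rewrite ReE rmorphM rmorphXn /= conjCK; ring.
Qed.

Lemma bracket_diag_mxE (C : numClosedFieldType) (N : nat) (d : 'I_N -> C)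
    (A : 'M[C]_N) k j :
  bracket (diag_mx (\row_i d i)) A k j = 'i * (d k - d j) * A k j.
Proof. by rewrite /bracket mul_diag_mx mul_mx_diag !mxE; ring. Qed.

Section OrthonormalFrame.

Variables (C : numClosedFieldType) (N : nat) (psi : 'I_N -> 'cV[C]_N).

Definition frame_mx : 'M[C]_N := \matrix_(i, k) psi k i ord0.
Definition frame_adj : 'M[C]_N := (map_mx Num.conj frame_mx)^T.

Definition coords (A : 'M[C]_N) : 'M[C]_N := frame_adj *m A *m frame_mx.

Lemma coordsE A k j : coords A k j = inner (A *m psi j) (psi k).
Proof.
rewrite /coords -mulmxA mxE /inner; apply: eq_bigr => i _.
by rewrite mulrC !mxE; congr (_ * _); apply: eq_bigr => l _; rewrite !mxE.
Qed.

Lemma coords_sum (I : Type) (r : seq I) (P : pred I) (c : I -> C)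
    (A : I -> 'M[C]_N) :
  coords (\sum_(i <- r | P i) c i *: A i) = \sum_(i <- r | P i) c i *: coords (A i).
Proof.
rewrite /coords mulmx_sumr mulmx_suml; apply: eq_bigr => i _.
by rewrite -scalemxAr -scalemxAl.
Qed.

Lemma coords_herm A : herm_op A -> forall k j, coords A j k = (coords A k j)^*.
Proof.
move=> hA k j; have -> : (coords A k j)^* = map_mx Num.conj (coords A)^T j k.
  by rewrite !mxE.
have adjK : map_mx Num.conj frame_adj^T = frame_mx.
  by apply/matrixP => a b; rewrite !mxE conjCK.
have frameK : map_mx Num.conj frame_mx^T = frame_adj by rewrite /frame_adj map_trmx.
by rewrite /coords !trmx_mul !map_mxM hA adjK frameK mulmxA.
Qed.

Hypothesis hortho : forall k j, inner (psi k) (psi j) = (k == j)%:R.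

Lemma frame_adjK : frame_adj *m frame_mx = 1%:M.
Proof.
apply/matrixP => k j; have := coordsE 1%:M k j; rewrite /coords mulmx1 => ->.
by rewrite mul1mx hortho mxE eq_sym.
Qed.

Lemma frame_mxK : frame_mx *m frame_adj = 1%:M.
Proof. exact: mulmx1C frame_adjK. Qed.

Lemma coords_inj : injective coords.
Proof.
move=> A B /(congr1 (fun X => frame_mx *m X *m frame_adj)).
by rewrite /coords !mulmxA frame_mxK !mul1mx -!mulmxA frame_mxK !mulmx1.
Qed.

Lemma coordsM A B : coords (A *m B) = coords A *m coords B.
Proof.
by rewrite /coords !mulmxA -[frame_adj *m A *m frame_mx *m _]mulmxA frame_mxK mulmx1.
Qed.

Lemma coords_bracket A B : coords (bracket A B) = bracket (coords A) (coords B).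
Proof.
by rewrite /bracket -!coordsM /coords -scalemxAr -scalemxAl mulmxBr mulmxBl.
Qed.

Variables (H2 : 'M[C]_N) (lambda : 'I_N -> C).
Hypothesis heig : forall k, H2 *m psi k = lambda k *: psi k.

Lemma coords_eigen : coords H2 = diag_mx (\row_k lambda k).
Proof.
apply/matrixP => k j; rewrite coordsE heig !mxE.
have -> : inner (lambda j *: psi j) (psi k) = lambda j * inner (psi j) (psi k).
  by rewrite /inner mulr_sumr; apply: eq_bigr => i _; rewrite mxE mulrA.
by rewrite hortho mulr_natr; have [->|] := eqVneq j k.
Qed.

Lemma eigenvalue_real : herm_op H2 -> forall k, (lambda k)^* = lambda k.
Proof.
move=> hH2 k; have := coords_herm hH2 k k.
by rewrite coords_eigen !mxE eqxx mulr1n => <-.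
Qed.

End OrthonormalFrame.

Lemma distinct_gaps_injective (I : eqType) (V : zmodType) (lambda : I -> V) :
  (forall k l k' l', k != l -> k' != l' -> (k, l) != (k', l') ->
     lambda k - lambda l != lambda k' - lambda l') ->
  injective lambda.
Proof.
move=> hgaps k j eq_kj; apply/eqP/negPn/negP => kj.
have := hgaps k j j k kj; rewrite eq_sym kj xpair_eqE (negbTE kj) /=.
by rewrite eq_kj subrr eqxx => /(_ isT isT).
Qed.

Definition ad_term (m : nat) : brterm := iter m (BNode BLeaf2) BLeaf1.

Lemma in_L_ad_comb (C : numClosedFieldType) (N : nat) (H1 H2 : 'M[C]_N)
    (n : nat) (c : nat -> C) :
  (forall m, c m \is Num.real) ->
  in_L H1 H2 (\sum_(m < n) c m *: br_eval H1 H2 (ad_term m)).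
Proof.
move=> c_real; exists [seq (c m, ad_term m) | m <- index_iota 0 n]; split.
  by rewrite all_map; apply/allP => m _; apply: c_real.
by rewrite big_map big_mkord.
Qed.

Section AdjointAction.

Variables (C : numClosedFieldType) (N : nat) (psi : 'I_N -> 'cV[C]_N).
Hypothesis hortho : forall k j, inner (psi k) (psi j) = (k == j)%:R.
Variables (H1 H2 : 'M[C]_N) (lambda : 'I_N -> C).
Hypothesis heig : forall k, H2 *m psi k = lambda k *: psi k.

Lemma coords_ad_term m k j :
  coords psi (br_eval H1 H2 (ad_term m)) k j =
  ('i * (lambda k - lambda j)) ^+ m * coords psi H1 k j.
Proof.
elim: m => [|m IH]; first by rewrite expr0 mul1r.
have -> : br_eval H1 H2 (ad_term m.+1) = bracket H2 (br_eval H1 H2 (ad_term m)).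
  by [].
rewrite (coords_bracket hortho) (coords_eigen hortho heig) bracket_diag_mxE IH exprS.
by rewrite mulrA.
Qed.

Lemma coords_ad_comb n (c : nat -> C) k j :
  coords psi (\sum_(m < n) c m *: br_eval H1 H2 (ad_term m)) k j =
  (\sum_(m < n) c m * ('i * (lambda k - lambda j)) ^+ m) * coords psi H1 k j.
Proof.
rewrite coords_sum summxE mulr_suml; apply: eq_bigr => m _.
by rewrite mxE coords_ad_term mulrA.
Qed.

End AdjointAction.

Theorem mainTheorem7 (C : numClosedFieldType) (N : nat) (hN : (1 < N)%N)
  (H1 H2 : 'M[C]_N) (hH1 : herm_op H1) (hH2 : herm_op H2)
  (lambda : 'I_N -> C) (psi : 'I_N -> 'cV[C]_N)
  (hortho : forall k j : 'I_N, inner (psi k) (psi j) = (k == j)%:R)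
  (heig : forall k : 'I_N, H2 *m psi k = lambda k *: psi k)
  (hi : forall k j : 'I_N, k != j -> inner (H1 *m psi k) (psi j) != 0)
  (hii : forall k l k' l' : 'I_N, k != l -> k' != l' -> (k, l) != (k', l') ->
           lambda k - lambda l != lambda k' - lambda l') :
  forall H : 'M[C]_N, herm_op H ->
    (forall k : 'I_N, inner (H *m psi k) (psi k) = 0) ->
    in_L H1 H2 H.
Proof.
move=> H hH hdiag.
pose node (p : 'I_N * 'I_N) := 'i * (lambda p.1 - lambda p.2).
have lambda_inj := distinct_gaps_injective hii.
have [Q [Q0 Qnode]] : exists Q : {poly C}, Q.[0] = 0 /\ forall p, p.1 != p.2 ->
    Q.[node p] = coords psi H p.1 p.2 / coords psi H1 p.1 p.2.
  apply: (exists_poly_interp_root0 (P := fun p => p.1 != p.2)).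
    move=> [k j] /= kj.
    by rewrite mulf_neq0 ?neq0Ci // subr_eq0 (inj_eq lambda_inj).
  move=> [k j] [k' j'] /= kj k'j' neq.
  by rewrite (inj_eq (mulfI (neq0Ci C))); apply: hii.
pose c m := 'Re Q`_m.
suff -> : H = \sum_(m < size Q) c m *: br_eval H1 H2 (ad_term m).
  by apply: (@in_L_ad_comb _ _ H1 H2 _ c) => m; exact: Creal_Re.
apply: (coords_inj hortho); apply/matrixP => k j.
rewrite (coords_ad_comb hortho H1 heig (size Q) c) horner_Re_coef.
have [<-|kj] := eqVneq k j.
  by rewrite subrr mulr0 rmorph0 Q0 rmorph0 addr0 !mul0r coordsE hdiag.
have node_conj : ('i * (lambda k - lambda j))^* = node (j, k).
  by rewrite rmorphM rmorphB /= conjCi !(eigenvalue_real hortho heig hH2) /node; ring.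
have H1kj_neq0 : coords psi H1 k j != 0 by rewrite coordsE hi // eq_sym.
rewrite node_conj (Qnode (j, k)) 1?eq_sym //.
rewrite -[_ * (_ - _)]/(node (k, j)) (Qnode (k, j)) //= fmorph_div /=.
rewrite -(coords_herm psi hH j k) -(coords_herm psi hH1 j k).
by field.
Qed.
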